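(* Let $H$ be a cluster graph, let $a$ be the maximum number of vertices of a connected component of $H$, and suppose $H$ has exactly $b$ connected components with $a$ vertices. Let $q$ be an integer with $b\le q\le |V(H)|$, and let $R$ be obtained from $H$ by deleting exactly one vertex from each component of $H$ with $a$ vertices. Then for every integer $h$: $H$ has a $q$-deletion such that the maximum degree of the remaining graph is $h$ if and only if $R$ has a $(q-b)$-deletion such that the maximum degree of the remaining graph is $h$.
   Context: A cluster graph is a graph in which every connected component is a complete graph. For a graph $G=(V,E)$ and integer $x\in[0,|V|]$, a set $X\subseteq V$ with $|X|=x$ is an $x$-deletion set of $G$ if $\Delta(G-X)=\min\{\Delta(G-Y):Y\subseteq V,|Y|=x\}$; an $x$-deletion of $G$ is the removal of an $x$-deletion set. Thus ''$G$ has an $x$-deletion with remaining maximum degree $h$'' means $\min\{\Delta(G-Y):|Y|=x\}=h$. *)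

(* A simple graph is a finite type T with a symmetric,
   irreflexive adjacency relation e.  Subgraphs are induced subgraphs on
   vertex sets S : {set T}. *)
From mathcomp Require Import all_boot.
Set Implicit Arguments. Unset Strict Implicit. Unset Printing Implicit Defensive.

Section Graphs.
Variables (T : finType) (e : rel T).

Definition deg_in (S : {set T}) (v : T) : nat := #|[set w in S | e v w]|.

(* maximum degree of the induced subgraph on S (0 if S is empty) *)
Definition maxdeg (S : {set T}) : nat := \max_(v in S) deg_in S v.

(* "the graph induced on S has an x-deletion with remaining maximum degree h":
   min { Delta(G - Y) : Y subset of S, |Y| = x } = h *)
Definition has_deletion (S : {set T}) (x h : nat) : Prop :=
  (exists Y : {set T}, [/\ Y \subset S, #|Y| = x & maxdeg (S :\: Y) = h]) /\
  (forall Y : {set T}, Y \subset S -> #|Y| = x -> h <= maxdeg (S :\: Y)).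

Definition comp (v : T) : {set T} := [set w | connect e v w].

Definition cluster_graph : Prop :=
  forall x y : T, x != y -> connect e x y -> e x y.

Definition components : {set {set T}} := [set comp v | v in T].

Definition max_comp_size : nat := \max_(v : T) #|comp v|.
End Graphs.

(* In a cluster graph the induced subgraph on S has maximum degree at most k
   iff every component meets S in at most k + 1 vertices.  Deleting the marked
   set D (one vertex of each largest component) together with a (q - b)-deletion
   of R is a q-deletion of H leaving the same graph, so the optimum for H is at
   most that for R.  Conversely, let a q-deletion of H leave maximum degree k.
   If k + 1 >= a, any (q - b)-deletion of R does as well.  Otherwise no
   component is entirely kept, so each kept marked vertex can be exchanged for
   a deleted unmarked vertex of its own component; this makes the deletion
   contain D without changing how many vertices any component keeps. *)
From Pilot Require Import Defs.
From mathcomp Require Import all_boot zify.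

Set Implicit Arguments. Unset Strict Implicit. Unset Printing Implicit Defensive.

Lemma exists_subset_card (T : finType) (B : {set T}) k :
  k <= #|B| -> exists2 A : {set T}, A \subset B & #|A| = k.
Proof.
rewrite -bin_gt0 -cards_draws => /card_gt0P[A].
by rewrite inE => /andP[AB /eqP kA]; exists A.
Qed.

Lemma cards_exchange (T : finType) (Z C : {set T}) c d :
  d \in Z -> c \notin Z -> (c \in C) = (d \in C) ->
  #|(c |: (Z :\ d)) :&: C| = #|Z :&: C|.
Proof.
move=> dZ cZ; case: (boolP (d \in C)) => dC cC.
- have -> : (c |: (Z :\ d)) :&: C = c |: ((Z :&: C) :\ d).
    by apply/setP => x; rewrite !inE; case: eqP => [->|]; rewrite ?cC ?andbA.
  rewrite cardsU1 !inE (negbTE cZ) andbF (cardsD1 d (Z :&: C)) inE dZ dC.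
  by rewrite add1n.
- apply: eq_card => x; rewrite !inE.
  case: (x =P c) => [->|_]; first by rewrite cC !andbF.
  by case: (x =P d) => [->|]; rewrite ?(negbTE dC) ?andbF.
Qed.

Section Deletions.
Variables (T : finType) (e : rel T).

Definition deletions_dominated (S1 : {set T}) x1 (S2 : {set T}) x2 :=
  forall Y1 : {set T}, Y1 \subset S1 -> #|Y1| = x1 ->
  exists2 Y2 : {set T}, Y2 \subset S2 /\ #|Y2| = x2
                      & maxdeg e (S2 :\: Y2) <= maxdeg e (S1 :\: Y1).

Lemma has_deletion_dominated S1 x1 S2 x2 h :
  deletions_dominated S1 x1 S2 x2 -> deletions_dominated S2 x2 S1 x1 ->
  has_deletion e S1 x1 h -> has_deletion e S2 x2 h.
Proof.
move=> dom12 dom21 [[Y1 [Y1S cY1 <-]] min1].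
have min2 (Y2 : {set T}) :
    Y2 \subset S2 -> #|Y2| = x2 -> maxdeg e (S1 :\: Y1) <= maxdeg e (S2 :\: Y2).
  move=> Y2S cY2; have [Y [YS cY] le_Y] := dom21 Y2 Y2S cY2.
  exact: leq_trans (min1 Y YS cY) le_Y.
split=> //; have [Y2 [Y2S cY2] le_Y2] := dom12 Y1 Y1S cY1.
by exists Y2; split=> //; apply/eqP; rewrite eqn_leq le_Y2 min2.
Qed.

End Deletions.

Section ClusterGraph.
Variables (T : finType) (e : rel T).
Hypotheses (e_sym : symmetric e) (e_irr : irreflexive e) (e_cl : cluster_graph e).

Lemma mem_comp v : v \in Defs.comp e v.
Proof. by rewrite inE connect0. Qed.

Lemma comp_components v : Defs.comp e v \in components e.
Proof. exact: imset_f. Qed.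

Lemma comp_eq u v : u \in Defs.comp e v -> Defs.comp e u = Defs.comp e v.
Proof.
rewrite inE => cvu; apply/setP => w; rewrite !inE.
by rewrite (same_connect (sym_connect_sym e_sym) cvu).
Qed.

Lemma mem_comp_eq u w v :
  u \in Defs.comp e w -> (u \in Defs.comp e v) = (w \in Defs.comp e v).
Proof.
rewrite !inE => cwu.
by rewrite -(same_connect_r (sym_connect_sym e_sym) cwu).
Qed.

Lemma cluster_adjE v w : e v w = (w != v) && connect e v w.
Proof.
apply/idP/andP => [evw|[wv cvw]]; last by apply: e_cl; rewrite // eq_sym.
split; last exact: connect1.
by apply: contraTneq evw => ->; rewrite e_irr.
Qed.

Lemma deg_in_cluster (S : {set T}) v :
  v \in S -> deg_in e S v = #|S :&: Defs.comp e v| - 1.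
Proof.
move=> vS; rewrite /deg_in (cardsD1 v (S :&: _)) !inE vS connect0 add1n subn1 /=.
by apply: eq_card => w; rewrite !inE cluster_adjE andbCA andbA.
Qed.

Lemma maxdeg_leP (S : {set T}) k :
  maxdeg e S <= k <-> forall v, #|S :&: Defs.comp e v| <= k.+1.
Proof.
split=> [le_k v|le_comp]; last first.
  by apply/bigmax_leqP => u uS; rewrite deg_in_cluster // leq_subLR add1n.
have [->|[u]] := set_0Vmem (S :&: Defs.comp e v); first by rewrite cards0.
rewrite inE => /andP[uS /comp_eq <-].
have := leq_trans (leq_bigmax_cond _ uS) le_k.
by rewrite deg_in_cluster // leq_subLR add1n.
Qed.

Variables (a : nat) (D : {set T}).
Hypothesis D_marks : forall C, C \in components e -> #|D :&: C| = (#|C| == a) :> nat.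

Lemma card_comp_marked d : d \in D -> #|Defs.comp e d| = a.
Proof.
move=> dD; have := D_marks (comp_components d).
have /card_gt0P : exists x, x \in D :&: Defs.comp e d.
  by exists d; rewrite inE dD mem_comp.
by move=> /[swap] ->; case: eqP.
Qed.

Lemma marked_uniq d d' : d \in D -> d' \in D -> d' \in Defs.comp e d -> d' = d.
Proof.
move=> dD d'D d'd; have : #|D :&: Defs.comp e d| <= 1.
  by rewrite D_marks ?comp_components ?leq_b1.
by move/card_le1_eqP; apply; rewrite inE ?d'D ?dD ?d'd ?mem_comp.
Qed.

Lemma card_marked : #|D| = #|[set C in components e | #|C| == a]|.
Proof.
have -> : [set C in components e | #|C| == a] = Defs.comp e @: D.
  apply/setP => C; rewrite inE; apply/andP/imsetP => [[/imsetP[v _ ->] /eqP va]|].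
    have /cards1P[d Dv] : #|D :&: Defs.comp e v| == 1.
      by rewrite D_marks ?comp_components // -va eqxx.
    have : d \in D :&: Defs.comp e v by rewrite Dv set11.
    by rewrite inE => /andP[dD dv]; exists d; rewrite ?(comp_eq dv).
  by move=> [d dD ->]; rewrite comp_components card_comp_marked.
rewrite card_in_imset // => d d' dD d'D eq_comp.
by apply/esym/(marked_uniq dD d'D); rewrite eq_comp mem_comp.
Qed.

Lemma exchange_marked k (Z : {set T}) : k < a ->
  (forall v, #|Z :&: Defs.comp e v| <= k) ->
  exists Z' : {set T}, [/\ Z' \subset ~: D, #|Z'| = #|Z|
                        & forall v, #|Z' :&: Defs.comp e v| <= k].
Proof.
move=> ka; have [n] := ubnP #|Z :&: D|; elim: n Z => // n IH Z.
rewrite ltnS => ZDn Zk.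
have [ZD0|[d]] := set_0Vmem (Z :&: D).
  by exists Z; split=> //; rewrite -disjoints_subset -setI_eq0 ZD0.
rewrite inE => /andP[dZ dD].
have /subsetPn[c cd cZ] : ~~ (Defs.comp e d \subset Z).
  apply: contraTN ka => /setIidPr dZ'; have := Zk d.
  by rewrite dZ' card_comp_marked // -leqNgt.
have cD : c \notin D.
  by apply: contra cZ => cD; rewrite (marked_uniq dD cD cd).
have [|v|Z' [Z'D cZ' Z'k]] := IH (c |: (Z :\ d)).
- apply: leq_trans ZDn; apply: proper_card; apply/properP; split.
    apply/subsetP => x; rewrite !inE; case: (x =P c) => [->|_ /andP[/andP[_ ->] ->]] //.
    by rewrite (negbTE cD) andbF.
  exists d; first by rewrite !inE dZ dD.
  by rewrite !inE eqxx dD orbF andbT; apply: contraNneq cD => <-.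
- by rewrite cards_exchange ?Zk // (mem_comp_eq v cd).
exists Z'; split=> //; rewrite cZ'.
by have := cards_exchange (C := setT) dZ cZ; rewrite !inE !setIT => /(_ erefl) ->.
Qed.

Hypothesis a_max : a = max_comp_size e.

Lemma card_comp_le v : #|Defs.comp e v| <= a.
Proof. by rewrite a_max; apply: leq_bigmax. Qed.

Lemma deletion_avoiding_marked (Y : {set T}) : #|D| <= #|Y| ->
  exists Y' : {set T}, [/\ Y' \subset ~: D, #|Y'| = #|Y| - #|D|
                         & maxdeg e (~: D :\: Y') <= maxdeg e (~: Y)].
Proof.
move=> DY; have YT : #|Y| <= #|T| by apply: max_card.
have cDC := cardsC D; set k := maxdeg e (~: Y).
have [ak|ka] := leqP a k.+1.
  have [|Y' Y'D cY'] := @exists_subset_card _ (~: D) (#|Y| - #|D|); first by lia.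
  exists Y'; split=> //; apply/maxdeg_leP => v; apply: leq_trans ak.
  exact: leq_trans (subset_leq_card (subsetIr _ _)) (card_comp_le v).
have [Z' [Z'D cZ' Z'k]] := exchange_marked ka ((maxdeg_leP _ _).1 (leqnn k)).
exists (~: D :\: Z'); split; first exact: subsetDl.
  by rewrite cardsDS // cZ'; have := cardsC Y; lia.
by rewrite setDDr setDv set0U (setIidPr Z'D); apply/maxdeg_leP.
Qed.

End ClusterGraph.

Theorem lemma23 (T : finType) (e : rel T)
  (e_sym : symmetric e) (e_irr : irreflexive e)
  (Hcl : cluster_graph e)
  (a b q : nat)
  (Ha : a = max_comp_size e)
  (Hb : b = #|[set C in components e | #|C| == a]|)
  (Hq : b <= q <= #|T|)
  (D : {set T})
  (HD : forall C, C \in components e -> #|D :&: C| = (#|C| == a) :> nat)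
  (h : nat) :
  has_deletion e [set: T] q h <-> has_deletion e (~: D) (q - b) h.
Proof.
have Db : #|D| = b by rewrite Hb (card_marked e_sym HD).
have dom_HR : deletions_dominated e [set: T] q (~: D) (q - b).
  move=> Y _ cY; rewrite setTD.
  have [|Y' [Y'D cY' le_Y']] := deletion_avoiding_marked e_sym e_irr Hcl HD Ha (Y := Y).
    by rewrite Db cY; case/andP: Hq.
  by exists Y'; first split; rewrite // cY' cY Db.
have dom_RH : deletions_dominated e (~: D) (q - b) [set: T] q.
  move=> Y' Y'D cY'; exists (Y' :|: D); last by rewrite setTD setCU setDE setIC.
  split; first exact: subsetT.
  rewrite cardsU cY' Db (_ : Y' :&: D = set0) ?cards0; first by lia.
  by apply/disjoint_setI0; rewrite disjoints_subset.
by split; apply: has_deletion_dominated.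
Qed.
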